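(* Let $G=D_6=\langle a,b\mid a^3=b^2=1,\ ba=a^2b\rangle$ be the dihedral group of order $6$. Then the class semigroup $\mathcal C(\mathcal B(G),\mathcal F(G))$ has exactly $26$ elements and is not a Clifford semigroup (for instance, the class $[b]$ of the one-term sequence $b$ does not lie in any subgroup of the class semigroup).
   Context: For a finite group $G$ (multiplicative, identity $1_G$), $\mathcal F(G)$ is the free abelian monoid with basis $G$ (sequences $S=g_1\boldsymbol{\cdot}\ldots\boldsymbol{\cdot}g_\ell$, operation $\boldsymbol{\cdot}$ = concatenation). $\pi(S)=\{g_{\tau(1)}\cdots g_{\tau(\ell)}:\tau\text{ a permutation of }[1,\ell]\}$, $\pi$ of the empty sequence is $\{1_G\}$, and $\mathcal B(G)=\{S\in\mathcal F(G):1_G\in\pi(S)\}$. For $S,S'\in\mathcal F(G)$, $S\sim S'$ means: for all $T\in\mathcal F(G)$, $S\boldsymbol{\cdot}T\in\mathcal B(G)\iff S'\boldsymbol{\cdot}T\in\mathcal B(G)$; this is a congruence, $[S]$ denotes the class of $S$, and the class semigroup $\mathcal C(\mathcal B(G),\mathcal F(G))$ is the set of classes with operation $[S]+[T]=[S\boldsymbol{\cdot}T]$. A commutative semigroup is a Clifford semigroup if every element lies in some subgroup of it. *)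

From mathcomp Require Import all_boot all_fingroup.
Set Implicit Arguments. Unset Strict Implicit. Unset Printing Implicit Defensive.

(* Sequences over a finite group gT: elements of the free abelian monoid F(G)
   are represented by lists [seq gT]; two lists represent the same element of
   F(G) iff they are perm_eq, and concatenation [++] is the monoid operation. *)

Definition inB (gT : finGroupType) (S : seq gT) : Prop :=
  exists S' : seq gT, perm_eq S S' /\ (\prod_(x <- S') x)%g = 1%g.

Definition seq_equiv (gT : finGroupType) (S S' : seq gT) : Prop :=
  forall T : seq gT, inB (S ++ T) <-> inB (S' ++ T).

Definition class_semigroup_card (gT : finGroupType) (n : nat) : Prop :=
  exists reps : seq (seq gT),
    size reps = n /\
    (forall i j, i < n -> j < n ->
        seq_equiv (nth [::] reps i) (nth [::] reps j) -> i = j) /\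
    (forall S : seq gT, exists2 R, R \in reps & seq_equiv S R).

(* A subgroup of the class semigroup, given as a ~-saturated set H of sequences
   (i.e. the union of the classes it contains): closed under the operation,
   containing an identity class [E], and with inverses in H. *)
Definition class_subgroup (gT : finGroupType) (H : seq gT -> Prop) : Prop :=
  (forall S S', seq_equiv S S' -> H S -> H S') /\
  (forall S T, H S -> H T -> H (S ++ T)) /\
  exists E, H E /\
    (forall S, H S -> seq_equiv (E ++ S) S) /\
    (forall S, H S -> exists T, H T /\ seq_equiv (S ++ T) E).

Definition in_some_subgroup (gT : finGroupType) (S : seq gT) : Prop :=
  exists H : seq gT -> Prop, class_subgroup H /\ H S.

Definition class_semigroup_clifford (gT : finGroupType) : Prop :=
  forall S : seq gT, in_some_subgroup S.

From mathcomp Require Import all_boot all_algebra all_fingroup.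
From mathcomp Require Import ring zify.
Import GRing.Theory.

(* Write G as Z/3 x| Z/2 and record a sequence over G by how often each of
   a, a^2, b, ab, a^2 b occurs in it.  Some ordering of the sequence has
   product 1 iff these counts satisfy the explicit condition [inBc].  It is
   necessary since the number of reflections must be even and since, after
   conjugating by a suitable rotation, a product in which exactly one factor
   has a nonzero rotation part is not 1.  It is sufficient since a^3 and a pair
   of equal reflections multiply to 1, so beyond 2 only the counts of rotations
   mod 3 and of reflections mod 2 matter, and for the finitely many reduced
   count vectors orderings with product 1 are found and checked by computation.
   Consequently the class of a sequence is determined by the values of [inBc]
   on its count vector plus the vectors of a finite box; comparing these
   signatures exhibits 26 classes, closed under appending any element.
   Finally [b]^4 = [b]^2 but [b] <> [b]^3, which is impossible in a group. *)

Lemma Zp_nat_eq0 p n : 1 < p -> ((n%:R : 'Z_p) == 0)%R = (n %% p == 0).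
Proof. by move=> hp; rewrite -val_eqE /= val_Zp_nat. Qed.

(* [(i, s)] stands for a^i b^s, multiplied according to b a = a^-1 b. *)
Definition D6 := ('Z_3 * bool)%type.

Definition d6_one : D6 := (0%R, false).
Definition rot1 : D6 := (1%R, false).
Definition rot2 : D6 := (2%:R%R, false).
Definition ref0 : D6 := (0%R, true).
Definition ref1 : D6 := (1%R, true).
Definition ref2 : D6 := (2%:R%R, true).

Definition d6_mul (x y : D6) : D6 :=
  ((x.1 + (if x.2 then - y.1 else y.1))%R, x.2 (+) y.2).

Definition d6_prod (L : seq D6) : D6 := foldr d6_mul d6_one L.

Lemma D6_cases (x : D6) :
  [\/ x = d6_one, x = rot1, x = rot2 | [\/ x = ref0, x = ref1 | x = ref2]].
Proof.
have e (i j : 'Z_3) : val i = val j -> i = j by exact: val_inj.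
case: x => [[[|[|[|i]]] Hi] []] //; rewrite /d6_one /rot1 /rot2 /ref0 /ref1 /ref2;
  do ?[by constructor; congr pair; apply: e | apply: Or44 ].
Qed.

Ltac case_D6 x := case: (D6_cases x) => [|||[]] ->.

Lemma d6_mul1 : left_id d6_one d6_mul.
Proof. by case=> x s; rewrite /d6_mul /= add0r. Qed.

Lemma d6_mulr1 : right_id d6_one d6_mul.
Proof. by case=> x s; rewrite /d6_mul /= oppr0 if_same addr0 addbF. Qed.

Lemma d6_mulA : associative d6_mul.
Proof. by case=> [x []] [y []] [z []]; rewrite /d6_mul /=; congr pair; ring. Qed.

Lemma d6_prod_cat L1 L2 : d6_prod (L1 ++ L2) = d6_mul (d6_prod L1) (d6_prod L2).
Proof. by elim: L1 => [|x L1 IH] /=; rewrite ?d6_mul1 // IH d6_mulA. Qed.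

Lemma d6_prod_refl_parity L : (d6_prod L).2 = odd (count snd L).
Proof. by elim: L => [|x L IH] //=; rewrite IH oddD oddb. Qed.

Definition cnt (x : D6) (L : seq D6) : nat := count_mem x L.
Arguments cnt : simpl never.

Lemma cnt_cons y x L : cnt y (x :: L) = ((x == y) + cnt y L)%N.
Proof. by []. Qed.

Lemma cnt_nil y : cnt y [::] = 0%N.
Proof. by []. Qed.

Lemma cnt_cat y L1 L2 : cnt y (L1 ++ L2) = (cnt y L1 + cnt y L2)%N.
Proof. exact: count_cat. Qed.

Lemma cnt_nseq y n x : cnt y (nseq n x) = ((x == y) * n)%N.
Proof. exact: count_nseq. Qed.

Lemma count_D6 (p : pred D6) L : count p L =
  (p d6_one * cnt d6_one L + p rot1 * cnt rot1 L + p rot2 * cnt rot2 L +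
   p ref0 * cnt ref0 L + p ref1 * cnt ref1 L + p ref2 * cnt ref2 L)%N.
Proof.
elim: L => [|x L IH]; first by rewrite /= !cnt_nil !muln0.
by rewrite /= !cnt_cons IH; case_D6 x => /=; ring.
Qed.

Lemma perm_cntP L L' : perm_eq L L' <-> forall y, cnt y L = cnt y L'.
Proof.
split=> [/seq.permP h y | h]; first exact: h.
by apply/allP => y _; apply/eqP; exact: h.
Qed.

Lemma d6_prod_rot L : ~~ has snd L ->
  d6_prod L = (((cnt rot1 L + 2 * cnt rot2 L)%N%:R)%R, false).
Proof.
elim: L => [|x L IH] //= /norP [hx /IH ->].
rewrite !cnt_cons; move: hx; case_D6 x => //= _;
  by rewrite /d6_mul /=; congr pair; rewrite !natrD ?natrM; ring.
Qed.

Lemma d6_prod_nseq_refl (x : D6) n :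
  x.2 -> d6_prod (nseq n x) = if odd n then x else d6_one.
Proof.
case: x => i [] // _; elim: n => [|n IH] //=; rewrite IH.
by case: (odd n); rewrite /d6_mul /= ?subrr ?oppr0 ?addr0.
Qed.

Lemma d6_prod_nseq_one n : d6_prod (nseq n d6_one) = d6_one.
Proof. by elim: n => //= n ->; rewrite d6_mul1. Qed.

(* Conjugation by a rotation. *)
Definition d6_shift (t : 'Z_3) (x : D6) : D6 := ((x.1 + (if x.2 then t else 0))%R, x.2).

Lemma d6_shift_mul t : {morph d6_shift t : x y / d6_mul x y}.
Proof. by case=> [x []] [y []]; rewrite /d6_mul /d6_shift /=; congr pair; ring. Qed.

Lemma d6_prod_shift t L : d6_prod (map (d6_shift t) L) = d6_shift t (d6_prod L).
Proof.
elim: L => [|x L IH] /=; first by rewrite /d6_shift /= addr0.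
by rewrite IH d6_shift_mul.
Qed.

Lemma d6_prod_rot_free L : all (fun x : D6 => x.1 == 0%R) L -> (d6_prod L).1 = 0%R.
Proof.
elim: L => [|x L IH] //= /andP [/eqP hx /IH hL].
by rewrite /d6_mul /= hx hL oppr0 if_same addr0.
Qed.

Lemma d6_prod_single_rot L : count (fun x : D6 => x.1 != 0%R) L = 1%N ->
  (d6_prod L).1 != 0%R.
Proof.
elim: L => [|x L IH] //=; case: (eqVneq x.1 0%R) => hx /=.
  by move/IH; rewrite /d6_mul /= hx add0r; case: x.2; rewrite ?oppr_eq0.
move=> /eqP; rewrite eqSS -leqn0 leqNgt -has_count -all_predC => hL.
rewrite /d6_mul /= d6_prod_rot_free ?oppr0 ?if_same ?addr0 //.
by apply: sub_all hL => y /= /negPn.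
Qed.

Lemma prod1_count_shift_rot_neq1 t L : d6_prod L = d6_one ->
  count (fun x => (d6_shift t x).1 != 0%R) L != 1%N.
Proof.
move=> h; apply/eqP => h1.
have := @d6_prod_single_rot (map (d6_shift t) L); rewrite count_map h1.
by rewrite d6_prod_shift h /d6_shift /= => /(_ erefl).
Qed.

Definition cvec := (nat * nat * nat * nat * nat)%type.

Definition counts (L : seq D6) : cvec :=
  (cnt rot1 L, cnt rot2 L, cnt ref0 L, cnt ref1 L, cnt ref2 L).

Definition inBc (u : cvec) : bool :=
  let: (n1, n2, f0, f1, f2) := u in
  let f := (f0 + f1 + f2)%N in
  let m := (n1 + n2)%N in
  let kinds := ((0 < f0) + (0 < f1) + (0 < f2))%N in
  if f == 0 then (n1 + 2 * n2) %% 3 == 0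
  else if odd f then false
  else if 2 <= m then true
  else if m == 1 then 2 <= kinds
  else ~~ ((kinds == 2) && [|| f0 == 1, f1 == 1 | f2 == 1]).

Lemma inBc_of_prod1 L : d6_prod L = d6_one -> inBc (counts L).
Proof.
move=> h; have := d6_prod_refl_parity L.
have := prod1_count_shift_rot_neq1 0%R _ h; have := prod1_count_shift_rot_neq1 1%R _ h.
have := prod1_count_shift_rot_neq1 2%:R%R _ h.
rewrite h !count_D6 /= => k2 k1 k0 hpar.
rewrite /inBc; case: ifP => hf; last by do ![case: ifP => ?]; lia.
have := @d6_prod_rot L; rewrite has_count count_D6 /= h => /(_ ltac:(lia)) [].
by move/esym/eqP; rewrite Zp_nat_eq0.
Qed.

Definition nred (p x : nat) : nat := if x < 2 then x else 2 + (x - 2) %% p.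

Lemma nred_small p x : x < 2 -> nred p x = x.
Proof. by rewrite /nred => ->. Qed.

Lemma nred_ge2 p x : (2 <= nred p x) = (2 <= x).
Proof. by rewrite /nred; case: ifP => h; lia. Qed.

Lemma nred_mod p x : nred p x = x %[mod p].
Proof. by rewrite /nred; case: ltnP => // h; rewrite modnDmr subnKC. Qed.

Lemma nred_eq p x y : 2 <= x -> 2 <= y -> x = y %[mod p] -> nred p x = nred p y.
Proof.
move=> hx hy; rewrite /nred ltnNge hx ltnNge hy /=.
by rewrite -{1}(subnKC hx) -{1}(subnKC hy) => /eqP; rewrite eqn_modDl => /eqP ->.
Qed.

Lemma nred_idem p x : nred p (nred p x) = nred p x.
Proof.
case: (ltnP x 2) => hx; first by rewrite !nred_small.
by apply: nred_eq; rewrite ?nred_ge2 ?nred_mod.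
Qed.

Lemma nredD p x y : nred p (x + y) = nred p (nred p x + nred p y).
Proof.
have hx := nred_ge2 p x; have hy := nred_ge2 p y.
have sx : x < 2 -> nred p x = x := @nred_small p x.
have sy : y < 2 -> nred p y = y := @nred_small p y.
case: (ltnP (x + y) 2) => hxy.
  by rewrite sx ?sy //; lia.
apply: nred_eq => //; first lia.
by apply/esym; rewrite -modnDm !nred_mod modnDm.
Qed.

Lemma nred_le p x : nred p x <= x.
Proof. by rewrite /nred; case: ifP => // h; have := leq_mod (x - 2) p; lia. Qed.

Lemma dvdn_sub_nred p x : p %| x - nred p x.
Proof. by rewrite -eqn_mod_dvd ?nred_le // nred_mod. Qed.

Definition cvec_add (u v : cvec) : cvec :=
  let: (u1, u2, u3, u4, u5) := u in let: (v1, v2, v3, v4, v5) := v in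
  (u1 + v1, u2 + v2, u3 + v3, u4 + v4, u5 + v5)%N.

Lemma cvec_addC u v : cvec_add u v = cvec_add v u.
Proof.
case: u => [[[[? ?] ?] ?] ?]; case: v => [[[[? ?] ?] ?] ?] /=.
by congr (_, _, _, _, _); apply: addnC.
Qed.

Lemma cvec_addA u v w : cvec_add u (cvec_add v w) = cvec_add (cvec_add u v) w.
Proof.
case: u => [[[[? ?] ?] ?] ?]; case: v => [[[[? ?] ?] ?] ?]; case: w => [[[[? ?] ?] ?] ?] /=.
by rewrite !addnA.
Qed.

Definition cvec_sub (u v : cvec) : cvec :=
  let: (u1, u2, u3, u4, u5) := u in let: (v1, v2, v3, v4, v5) := v in
  (u1 - v1, u2 - v2, u3 - v3, u4 - v4, u5 - v5)%N.

Definition cvec_red (u : cvec) : cvec :=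
  let: (u1, u2, u3, u4, u5) := u in
  (nred 3 u1, nred 3 u2, nred 2 u3, nred 2 u4, nred 2 u5).

Lemma inBc_red u : inBc (cvec_red u) = inBc u.
Proof.
case: u => [[[[n1 n2] f0] f1] f2]; rewrite /inBc /cvec_red.
have e2 x : ((nred 2 x == 0) = (x == 0)) * ((nred 2 x == 1) = (x == 1)) *
            ((0 < nred 2 x) = (0 < x)) * (odd (nred 2 x) = odd x).
  by rewrite /nred; case: ifP => h; do !split; lia.
have e3 x : ((nred 3 x == 0) = (x == 0)) * ((nred 3 x == 1) = (x == 1)) *
            ((2 <= nred 3 x) = (2 <= x)) * (nred 3 x %% 3 = x %% 3).
  by rewrite /nred; case: ifP => h; do !split; lia.
have -> : (nred 2 f0 + nred 2 f1 + nred 2 f2 == 0) = (f0 + f1 + f2 == 0).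
  by rewrite !addn_eq0 !e2.
have -> : odd (nred 2 f0 + nred 2 f1 + nred 2 f2) = odd (f0 + f1 + f2).
  by rewrite !oddD !e2.
have -> : (nred 3 n1 + 2 * nred 3 n2) %% 3 = (n1 + 2 * n2) %% 3.
  by rewrite -modnDm -modnMm (e3 n2).2 modnMm modnDm -modnDml (e3 n1).2 modnDml.
have [[[a1 b1] c1] _] := e3 n1; have [[[a2 b2] c2] _] := e3 n2.
have -> : (2 <= nred 3 n1 + nred 3 n2) = (2 <= n1 + n2) by lia.
have -> : (nred 3 n1 + nred 3 n2 == 1) = (n1 + n2 == 1) by lia.
by rewrite !e2.
Qed.

Lemma cvec_red_idem u : cvec_red (cvec_red u) = cvec_red u.
Proof. by case: u => [[[[? ?] ?] ?] ?] /=; rewrite !nred_idem. Qed.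

Lemma cvec_red_add u v :
  cvec_red (cvec_add u v) = cvec_red (cvec_add (cvec_red u) (cvec_red v)).
Proof. by case: u => [[[[? ?] ?] ?] ?]; case: v => [[[[? ?] ?] ?] ?] /=; rewrite -!nredD. Qed.

Lemma inBc_add_red u v : inBc (cvec_add u v) = inBc (cvec_add (cvec_red u) (cvec_red v)).
Proof. by rewrite -inBc_red cvec_red_add inBc_red. Qed.

Lemma inBc_add_redr u t : inBc (cvec_add u t) = inBc (cvec_add u (cvec_red t)).
Proof. by rewrite inBc_add_red [RHS]inBc_add_red cvec_red_idem. Qed.

Definition canon (u : cvec) : seq D6 :=
  let: (n1, n2, f0, f1, f2) := u in
  nseq n1 rot1 ++ nseq n2 rot2 ++ nseq f0 ref0 ++ nseq f1 ref1 ++ nseq f2 ref2.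

Lemma counts_cat L1 L2 : counts (L1 ++ L2) = cvec_add (counts L1) (counts L2).
Proof. by rewrite /counts !cnt_cat. Qed.

Lemma counts_canon u : counts (canon u) = u.
Proof.
case: u => [[[[n1 n2] f0] f1] f2]; rewrite /counts /canon !cnt_cat !cnt_nseq /=.
by congr (_, _, _, _, _); lia.
Qed.

Lemma cnt_one_canon u : cnt d6_one (canon u) = 0%N.
Proof. by case: u => [[[[n1 n2] f0] f1] f2]; rewrite /canon !cnt_cat !cnt_nseq. Qed.

Lemma perm_countsP L L' :
  cnt d6_one L = cnt d6_one L' -> counts L = counts L' -> perm_eq L L'.
Proof. by move=> h1 [h2 h3 h4 h5 h6]; apply/perm_cntP => y; case_D6 y. Qed.

Lemma perm_counts {L L'} : perm_eq L L' -> counts L = counts L'.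
Proof. by move/perm_cntP => h; rewrite /counts !h. Qed.

Lemma perm_canon L : perm_eq L (nseq (cnt d6_one L) d6_one ++ canon (counts L)).
Proof.
apply: perm_countsP; first by rewrite cnt_cat cnt_nseq cnt_one_canon eqxx mul1n addn0.
by rewrite counts_cat counts_canon /counts !cnt_nseq.
Qed.

Lemma cvec_add_red_sub u : cvec_add (cvec_red u) (cvec_sub u (cvec_red u)) = u.
Proof. by case: u => [[[[? ?] ?] ?] ?] /=; rewrite !subnKC ?nred_le. Qed.

Lemma d6_prod_canon_trivial n1 n2 f0 f1 f2 : 3 %| n1 -> 3 %| n2 ->
  2 %| f0 -> 2 %| f1 -> 2 %| f2 -> d6_prod (canon (n1, n2, f0, f1, f2)) = d6_one.
Proof.
move=> h1 h2; rewrite !dvdn2 => h3 h4 h5.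
rewrite /canon catA d6_prod_cat d6_prod_rot; last by rewrite has_cat !has_nseq /= !andbF.
rewrite !d6_prod_cat !d6_prod_nseq_refl // (negbTE h3) (negbTE h4) (negbTE h5).
rewrite !cnt_cat !cnt_nseq /= !d6_mul1 d6_mulr1 /d6_one.
by congr pair; apply/eqP; rewrite Zp_nat_eq0; lia.
Qed.

Lemma prod1_lift (L W : seq D6) :
  perm_eq W (canon (cvec_red (counts L))) -> d6_prod W = d6_one ->
  exists L', perm_eq L L' /\ d6_prod L' = d6_one.
Proof.
move=> hW h1; set u := counts L; set d := cvec_sub u (cvec_red u).
exists (nseq (cnt d6_one L) d6_one ++ W ++ canon d); split.
  apply: perm_trans (perm_canon L) _; rewrite perm_cat2l.
  apply: perm_countsP.
    by rewrite cnt_cat ((perm_cntP _ _).1 hW) !cnt_one_canon.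
  by rewrite counts_cat (perm_counts hW) !counts_canon cvec_add_red_sub.
have hd : d6_prod (canon d) = d6_one.
  case: u @d => [[[[n1 n2] f0] f1] f2].
  by apply: d6_prod_canon_trivial; apply: dvdn_sub_nred.
by rewrite d6_prod_cat d6_prod_nseq_one d6_mul1 d6_prod_cat h1 hd d6_mul1.
Qed.

Definition cvec_box : seq cvec :=
  [seq (u, n5) | u <- [seq (u, n4) | u <- [seq (u, n3) | u <- [seq (n1, n2) |
     n1 <- iota 0 5, n2 <- iota 0 5], n3 <- iota 0 4], n4 <- iota 0 4], n5 <- iota 0 4].

Lemma cvec_red_box u : cvec_red u \in cvec_box.
Proof.
have h3 x : nred 3 x \in iota 0 5 by rewrite mem_iota /nred; case: ifP => h; lia.
have h2 x : nred 2 x \in iota 0 4 by rewrite mem_iota /nred; case: ifP => h; lia.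
by case: u => [[[[? ?] ?] ?] ?] /=; do 4 (apply: allpairs_f => //).
Qed.

(* Dynamic programming: since [v - e_x] precedes [v] in [cvec_box], one pass
   computes, for every [v], an ordering of [canon v] for each reachable
   product.  Only its output matters, through [prod1_witness_ok]. *)
Definition cvec_le (u v : cvec) : bool := cvec_add (cvec_sub v u) u == v.

Definition table_lookup (tab : seq (cvec * seq (D6 * seq D6))) (v : cvec) :=
  (nth (v, [::]) tab (find (fun e => e.1 == v) tab)).2.

Definition products_step (tab : seq (cvec * seq (D6 * seq D6))) (v : cvec) :=
  if v == (0, 0, 0, 0, 0)%N then [:: (d6_one, [::])] else
  foldr (fun p acc => if p.1 \in map fst acc then acc else p :: acc) [::]
    [seq (d6_mul x p.1, x :: p.2) | x <- [:: rot1; rot2; ref0; ref1; ref2],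
       p <- if cvec_le (counts [:: x]) v
            then table_lookup tab (cvec_sub v (counts [:: x])) else [::]].

Definition products_table : seq (cvec * seq (D6 * seq D6)) :=
  foldl (fun tab v => (v, products_step tab v) :: tab) [::] cvec_box.

Definition prod1_witness (v : cvec) : seq D6 :=
  let ps := table_lookup products_table v in
  (nth (d6_one, [::]) ps (find (fun p => p.1 == d6_one) ps)).2.

Lemma prod1_witness_ok : all (fun v => inBc v ==>
  (d6_prod (prod1_witness v) == d6_one) && perm_eq (prod1_witness v) (canon v)) cvec_box.
Proof. by vm_compute. Qed.

Lemma prod1_of_inBc L : inBc (counts L) -> exists L', perm_eq L L' /\ d6_prod L' = d6_one.
Proof.
rewrite -inBc_red => h.
have /implyP /(_ h) /andP [/eqP h1 hp] := allP prod1_witness_ok _ (cvec_red_box (counts L)).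
exact: prod1_lift hp h1.
Qed.

Lemma prod1_permP L : (exists L', perm_eq L L' /\ d6_prod L' = d6_one) <-> inBc (counts L).
Proof.
split; last exact: prod1_of_inBc.
by case=> L' [/perm_counts -> /inBc_of_prod1].
Qed.

Definition class_sig (u : cvec) : seq bool := [seq inBc (cvec_add u t) | t <- cvec_box].

Lemma class_sigP u v :
  reflect (forall t, inBc (cvec_add u t) = inBc (cvec_add v t))
          (class_sig u == class_sig v).
Proof.
apply: (iffP eqP) => [/eq_in_map h t | h]; last by apply/eq_in_map => t _; exact: h.
by rewrite inBc_add_redr [RHS]inBc_add_redr; apply: h; exact: cvec_red_box.
Qed.

Lemma class_sig_addl e {u v} :
  class_sig u = class_sig v -> class_sig (cvec_add e u) = class_sig (cvec_add e v).
Proof.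
move/eqP/class_sigP => h; apply/eqP/class_sigP => t.
by rewrite -!cvec_addA !(cvec_addA e) !(cvec_addC e) -!cvec_addA.
Qed.

Definition class_reps : seq cvec := [::
  (0,0,0,0,0); (0,0,0,0,1); (0,0,0,0,2); (0,0,0,0,3); (0,0,0,1,0); (0,0,0,1,1);
  (0,1,0,0,1); (0,1,0,0,2); (0,0,0,2,0); (0,1,0,1,0); (0,1,0,1,1); (0,0,1,1,1);
  (0,0,0,3,0); (0,1,0,2,0); (0,0,1,0,0); (0,0,1,0,1); (0,0,1,1,0); (0,0,2,0,0);
  (0,1,1,0,0); (0,0,3,0,0); (0,1,2,0,0); (0,1,0,0,0); (0,2,0,0,0); (1,1,0,0,0);
  (2,0,0,0,0); (1,0,0,0,0)]%N.

Lemma class_reps_sig_uniq : uniq (map class_sig class_reps).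
Proof. by vm_compute. Qed.

Lemma class_reps_closed : all (fun r => all (fun x =>
  class_sig (cvec_add (counts [:: x]) r) \in map class_sig class_reps)
  [:: rot1; rot2; ref0; ref1; ref2]) class_reps.
Proof. by vm_compute. Qed.

Lemma class_reps_cover L : exists2 r, r \in class_reps & class_sig (counts L) = class_sig r.
Proof.
elim: L => [|x L [r hr hL]]; first by exists (0, 0, 0, 0, 0)%N.
rewrite -cat1s counts_cat (class_sig_addl _ hL).
have [-> | hx] := eqVneq x d6_one.
  by exists r => //; congr class_sig; case: (r) => [[[[? ?] ?] ?] ?].
have hx' : x \in [:: rot1; rot2; ref0; ref1; ref2] by move: hx; case_D6 x.
by have /mapP [r' hr' ->] := allP (allP class_reps_closed r hr) x hx'; exists r'.
Qed.

Section SeqEquiv.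

Context {gT : finGroupType}.
Implicit Types S T U : seq gT.

Lemma seq_equiv_sym {S S'} : seq_equiv S S' -> seq_equiv S' S.
Proof. by move=> h T; split=> /(h T). Qed.

Lemma seq_equiv_trans {S1 S2 S3} : seq_equiv S1 S2 -> seq_equiv S2 S3 -> seq_equiv S1 S3.
Proof. by move=> h1 h2 T; split=> [/(h1 T)/(h2 T) | /(h2 T)/(h1 T)]. Qed.

Lemma seq_equiv_catr U {S S'} : seq_equiv S S' -> seq_equiv (S ++ U) (S' ++ U).
Proof. by move=> h T; rewrite -!catA; exact: h. Qed.

Lemma perm_inB {S S'} : perm_eq S S' -> inB S -> inB S'.
Proof.
by move=> hp [S'' [hp' h]]; exists S''; split=> //; apply: perm_trans hp'; rewrite perm_sym.
Qed.

Lemma perm_seq_equiv {S S'} : perm_eq S S' -> seq_equiv S S'.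
Proof. by move=> hp T; split; apply: perm_inB; rewrite perm_cat2r // perm_sym. Qed.

Lemma seq_equiv_catl U {S S'} : seq_equiv S S' -> seq_equiv (U ++ S) (U ++ S').
Proof.
move=> h; apply: seq_equiv_trans (perm_seq_equiv (permEl (perm_catC U S))) _.
exact: seq_equiv_trans (seq_equiv_catr U h) (perm_seq_equiv (permEl (perm_catC S' U))).
Qed.

(* x^2 x^2 = x^2 forces x^2 = 1 in a group, hence x = x^2 x. *)
Lemma class_subgroup_square_idem {H S} : class_subgroup H -> H S ->
  seq_equiv ((S ++ S) ++ (S ++ S)) (S ++ S) -> seq_equiv S ((S ++ S) ++ S).
Proof.
case=> _ [hcl [E [_ [hid hinv]]]] hS h4.
have hS2 : H (S ++ S) := hcl _ _ hS hS.
have [T [_ hT]] := hinv _ hS2.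
have hE : seq_equiv E (S ++ S).
  apply: seq_equiv_trans (seq_equiv_sym hT) _.
  apply: seq_equiv_trans (seq_equiv_catr T (seq_equiv_sym h4)) _; rewrite -catA.
  apply: seq_equiv_trans (seq_equiv_catl (S ++ S) hT) _.
  exact: seq_equiv_trans (perm_seq_equiv (permEl (perm_catC _ _))) (hid _ hS2).
exact: seq_equiv_trans (seq_equiv_sym (hid _ hS)) (seq_equiv_catr S hE).
Qed.

End SeqEquiv.

Section Presentation.

Variables (gT : finGroupType) (a b : gT).
Hypotheses (hcard : #|[set: gT]| = 6) (hgen : <<[set a; b]>>%g = [set: gT]).
Hypotheses (ha : (a ^+ 3 = 1)%g) (hb : (b ^+ 2 = 1)%g) (hba : (b * a = a ^+ 2 * b)%g).

Definition d6_enc (x : D6) : gT := (a ^+ val x.1 * b ^+ x.2)%g.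

Lemma conj_b_pow k : (b * a ^+ k = a ^+ (2 * k) * b)%g.
Proof.
elim: k => [|k IH]; first by rewrite expg0 mulg1 mul1g.
by rewrite expgSr mulgA IH -mulgA hba mulgA -expgD mulnS addn2.
Qed.

Lemma d6_enc_mul x y : (d6_enc x * d6_enc y)%g = d6_enc (d6_mul x y).
Proof.
have e i j (s t : bool) : (a ^+ i * b ^+ s * (a ^+ j * b ^+ t) =
    a ^+ ((i + (if s then 2 * j else j)) %% 3)%N * b ^+ ((s + t) %% 2)%N)%g.
  rewrite (expg_mod _ ha) (expg_mod _ hb) expgD; case: s.
    rewrite expg1 (expgD b 1) expg1 !mulgA; congr (_ * _)%g.
    by rewrite -mulgA conj_b_pow mulgA.
  by rewrite expg0 mulg1 mulgA.
by rewrite /d6_enc e; case_D6 x; case_D6 y.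
Qed.

Lemma d6_enc_one : d6_enc d6_one = 1%g.
Proof. by rewrite /d6_enc /= expg0 mulg1. Qed.

Lemma d6_enc_prod L : (\prod_(x <- map d6_enc L) x)%g = d6_enc (d6_prod L).
Proof.
elim: L => [|x L IH]; first by rewrite big_nil d6_enc_one.
by rewrite /= big_cons IH d6_enc_mul.
Qed.

Lemma d6_enc_surj g : exists x, d6_enc x = g.
Proof.
set A := [set d6_enc x | x : D6].
have gA : group_set A.
  apply/group_setP; split; first by apply/imsetP; exists d6_one; rewrite ?d6_enc_one.
  by move=> _ _ /imsetP [x _ ->] /imsetP [y _ ->]; rewrite d6_enc_mul imset_f.
have : ([set a; b] \subset A)%g.
  apply/subsetP => z; rewrite !inE => /orP [] /eqP ->; apply/imsetP.
    by exists rot1; rewrite // /d6_enc /= expg1 expg0 mulg1.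
  by exists ref0; rewrite // /d6_enc /= expg1 expg0 mul1g.
rewrite -(gen_subG _ (Group gA)) hgen => /subsetP /(_ g (in_setT g)) /imsetP [x _ ->].
by exists x.
Qed.

Lemma d6_enc_inj : injective d6_enc.
Proof.
have : #|d6_enc @: [set: D6]| == #|[set: D6]|.
  have -> : #|[set: D6]| = 6 by rewrite cardsT card_prod card_ord card_bool.
  suff -> : d6_enc @: [set: D6] = [set: gT] by rewrite hcard.
  by apply/setP => g; rewrite inE; have [x <-] := d6_enc_surj g; exact: imset_f.
by move/imset_injP => h x y; apply: h; rewrite inE.
Qed.

Definition d6_dec (g : gT) : D6 := odflt d6_one [pick x | d6_enc x == g].

Lemma d6_decK : cancel d6_dec d6_enc.
Proof.
move=> g; rewrite /d6_dec; case: pickP => [x /eqP // | h].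
by have [x hx] := d6_enc_surj g; move: (h x); rewrite hx eqxx.
Qed.

Lemma d6_encK : cancel d6_enc d6_dec.
Proof. by move=> x; apply: d6_enc_inj; rewrite d6_decK. Qed.

Definition gcounts (S : seq gT) : cvec := counts (map d6_dec S).

Lemma gcounts_cat S T : gcounts (S ++ T) = cvec_add (gcounts S) (gcounts T).
Proof. by rewrite /gcounts map_cat counts_cat. Qed.

Lemma inB_gcounts S : inB S <-> inBc (gcounts S).
Proof.
rewrite -prod1_permP; split=> [[S' [hp h1]] | [L [hp h1]]].
  exists (map d6_dec S'); split; first exact: perm_map.
  apply: d6_enc_inj.
  by rewrite -d6_enc_prod -map_comp (eq_map d6_decK) map_id h1 d6_enc_one.
exists (map d6_enc L); split; last by rewrite d6_enc_prod h1 d6_enc_one.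
by rewrite -(mapK d6_decK S); apply: perm_map.
Qed.

Definition realise (u : cvec) : seq gT := map d6_enc (canon u).

Lemma gcounts_realise u : gcounts (realise u) = u.
Proof. by rewrite /gcounts /realise (mapK d6_encK) counts_canon. Qed.

Lemma seq_equivP (S S' : seq gT) :
  seq_equiv S S' <-> class_sig (gcounts S) = class_sig (gcounts S').
Proof.
split=> [h | /eqP /class_sigP h T].
  apply/eqP/class_sigP => t; have := h (realise t).
  by rewrite !inB_gcounts !gcounts_cat gcounts_realise => -[h1 h2]; apply/idP/idP.
by rewrite !inB_gcounts !gcounts_cat h.
Qed.

Lemma class_semigroup_card26 : class_semigroup_card gT 26.
Proof.
exists (map realise class_reps); rewrite size_map; split=> //; split.
  move=> i j hi hj /seq_equivP; rewrite !(nth_map (0, 0, 0, 0, 0)%N) // !gcounts_realise.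
  move=> h; apply/eqP; rewrite -(nth_uniq [::] _ _ class_reps_sig_uniq) ?size_map //.
  by rewrite !(nth_map (0, 0, 0, 0, 0)%N) // h.
move=> S; have [r hr hS] := class_reps_cover (map d6_dec S).
exists (realise r); first exact: map_f.
by apply/seq_equivP; rewrite gcounts_realise.
Qed.

Lemma gcounts_nseq_b n : gcounts (nseq n b) = (0, 0, n, 0, 0)%N.
Proof.
have db : d6_dec b = ref0 by rewrite -(d6_encK ref0) /d6_enc /= expg1 expg0 mul1g.
by rewrite /gcounts map_nseq db /counts !cnt_nseq /=; congr (_, _, _, _, _); lia.
Qed.

Lemma b_not_in_subgroup : ~ in_some_subgroup [:: b].
Proof.
case=> H [hH hb1].
have h42 : seq_equiv (nseq 4 b) (nseq 2 b).
  by apply/seq_equivP; rewrite !gcounts_nseq_b; vm_compute.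
have h13 : ~ seq_equiv (nseq 1 b) (nseq 3 b).
  by move/seq_equivP/eqP; rewrite !gcounts_nseq_b; vm_compute.
exact: h13 (class_subgroup_square_idem hH hb1 h42).
Qed.

End Presentation.

Theorem mainTheorem11 (gT : finGroupType) (a b : gT)
  (hcard : #|[set: gT]| = 6)
  (hgen : <<[set a; b]>>%g = [set: gT])
  (ha : (a ^+ 3 = 1)%g) (hb : (b ^+ 2 = 1)%g)
  (hba : (b * a = a ^+ 2 * b)%g) :
  class_semigroup_card gT 26 /\
  ~ class_semigroup_clifford gT /\
  ~ in_some_subgroup [:: b].
Proof.
have nb := b_not_in_subgroup gT a b hcard hgen ha hb hba.
split; first exact: class_semigroup_card26 gT a b hcard hgen ha hb hba.
by split=> // hcl; apply: nb; exact: hcl.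
Qed.
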